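(* For every set of formulas $\Gamma$ and formula $\varphi$: (1) $\Gamma\vdash_{\mathsf{NeL}^1}\varphi$ iff $\Gamma\models_{\mathfrak{N}_w^1}\varphi$; (2) $\Gamma\vdash_{\mathsf{NeL}^{\mathrm{as},1}}\varphi$ iff $\Gamma\models_{\mathfrak{N}^1}\varphi$.
   Context: Formulas are built from a countably infinite set of variables using binary $\otimes,\circ$ and unary ${}^{*}$; $\mathbf{Fm}$ is the formula algebra. Abbreviations (also term operations): $\varphi\Rightarrow\psi:=(\varphi\circ\psi^{*})^{*}$; $\varphi\Leftrightarrow\psi:=(\varphi\Rightarrow\psi)\otimes(\psi\Rightarrow\varphi)$; $\varphi\not\Leftrightarrow\psi:=(\varphi\Leftrightarrow\psi)^{*}$; $\varphi\not\Leftrightarrow\psi\not\Leftrightarrow\chi:=((\varphi\not\Leftrightarrow\psi)\otimes(\varphi\not\Leftrightarrow\chi))\otimes(\psi\not\Leftrightarrow\chi)$; $\varphi\oplus\psi:=(\varphi^{*}\otimes\psi^{*})^{*}$. $\mathsf{NeL}$: axiom schemes (A1) $\varphi\Rightarrow\varphi$; (A2) $(\varphi\circ\psi)\Rightarrow(\psi\circ\varphi)$; (A3) $\varphi\Rightarrow\varphi^{**}$; (A4) $(\varphi\Rightarrow\psi)\Rightarrow(\varphi\circ\psi)$; (A5) $(\varphi\otimes\psi)\Leftrightarrow(\psi\otimes\varphi)$; (A6) $((\varphi\otimes\psi)\Rightarrow\chi)\Rightarrow((\varphi\otimes\chi^{*})\Rightarrow\psi^{*})$; (A7) $(\varphi\not\Leftrightarrow\psi\not\Leftrightarrow\chi)\Rightarrow((\varphi\Rightarrow\psi)\Rightarrow((\psi\Rightarrow\chi)\Rightarrow(\varphi\Rightarrow\chi)))$;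 rules on arbitrary formulas: $\varphi\Rightarrow\psi,\varphi/\psi$; $\varphi,\psi/\varphi\otimes\psi$; $\varphi\Leftrightarrow\psi,\chi/\chi'$ ($\chi'$ from $\chi$ replacing one or more occurrences of $\varphi$ by $\psi$); $\varphi\otimes\psi/\varphi$. $\mathsf{NeL}^1$ is $\mathsf{NeL}$ plus the rules $\varphi/\varphi\oplus\psi$ and (A8) $\varphi\Rightarrow\psi,\psi\Rightarrow\chi/\varphi\Rightarrow\chi$; $\mathsf{NeL}^{\mathrm{as},1}$ is $\mathsf{NeL}^1$ plus the axiom schemes $(\varphi\otimes\psi)\otimes\chi\Rightarrow\varphi\otimes(\psi\otimes\chi)$ and $\varphi\otimes(\psi\otimes\chi)\Rightarrow(\varphi\otimes\psi)\otimes\chi$. A weak $\mathcal{N}$-algebra is an algebra $(A,\otimes,\circ,{}^{*})$ of type $(2,2,1)$ with $\otimes,\circ$ commutative, $x^{**}=x$, $(x\otimes y)\circ z=(x\otimes z)\circ y$; an $\mathcal{N}$-algebra has in addition $\otimes$ associative. With $\mathsf{t}\ne\mathsf{f}$ symbols not in $A$, $\overline A=A\cup\{\mathsf{t},\mathsf{f}\}$, an $\mathfrak{N}_w$-model is $(\mathbf A,\perp,\{\mathsf{t},\mathsf{f}\})$, $\mathbf A$ a weak $\mathcal{N}$-algebra, $\perp\subseteq\overline A\times\overline A$, such that for all $x,y,z\in A$: (a) $x\perp x^{*}$; (b) $x\perp y^{*}$ and $y\perp x^{*}$ imply $x=y$; (c) $x\perp y$ iff $x\circ y\perp\mathsf{t}$;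 (d) $x\perp\mathsf{t}$ iff $x^{*}\perp\mathsf{f}$; (e) $x\perp\mathsf{f}$ and $y\perp\mathsf{f}$ iff $x\otimes y\perp\mathsf{f}$; (f) $(x\circ y^{*})^{*}\perp(x\circ y)^{*}$; (g) $x\perp y$ and $x\perp\mathsf{f}$ imply $y\perp\mathsf{t}$; (h) $(x\not\Leftrightarrow y\not\Leftrightarrow z)\perp((x\Rightarrow y)\Rightarrow((y\Rightarrow z)\Rightarrow(x\Rightarrow z)))^{*}$. $\mathfrak{N}_w^1$ is the class of $\mathfrak{N}_w$-models satisfying, for all $x,y,z\in A$: $x\perp\mathsf{f}$ implies $x\oplus y\perp\mathsf{f}$; and $x\perp y^{*}$, $y\perp z^{*}$ imply $x\perp z^{*}$. $\mathfrak{N}^1$ is the subclass of those with $\mathbf A$ an $\mathcal{N}$-algebra. $F_\perp=\{a\in A:a\perp\mathsf{f}\}$. For a class $K$, $\Gamma\models_K\varphi$ iff there is a finite $\Gamma'\subseteq\Gamma$ such that for all models in $K$ and homomorphisms $h:\mathbf{Fm}\to\mathbf A$, $h(\Gamma')\subseteq F_\perp$ implies $h(\varphi)\in F_\perp$. *)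

From Stdlib Require Import List.
Import ListNotations.

Inductive fm : Type :=
| Var : nat -> fm
| Ot : fm -> fm -> fm        (* ⊗ *)
| Oc : fm -> fm -> fm        (* ∘ *)
| St : fm -> fm.             (* ^* *)

Definition fImp (a b : fm) : fm := St (Oc a (St b)).
Definition fIff (a b : fm) : fm := Ot (fImp a b) (fImp b a).
Definition fNiff (a b : fm) : fm := St (fIff a b).
Definition fNe3 (a b c : fm) : fm := Ot (Ot (fNiff a b) (fNiff a c)) (fNiff b c).
Definition fOplus (a b : fm) : fm := St (Ot (St a) (St b)).

(** [repl1 p q c c'] : c' is obtained from c by replacing one or more
    occurrences of p by q. *)
Inductive repl1 (p q : fm) : fm -> fm -> Prop :=
| repl_here : repl1 p q p q
| repl_Ot : forall a a' b b',
    (a = a' \/ repl1 p q a a') -> (b = b' \/ repl1 p q b b') ->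
    (repl1 p q a a' \/ repl1 p q b b') -> repl1 p q (Ot a b) (Ot a' b')
| repl_Oc : forall a a' b b',
    (a = a' \/ repl1 p q a a') -> (b = b' \/ repl1 p q b b') ->
    (repl1 p q a a' \/ repl1 p q b b') -> repl1 p q (Oc a b) (Oc a' b')
| repl_St : forall a a', repl1 p q a a' -> repl1 p q (St a) (St a').

(** * Derivability.
    [derivable false] is NeL^1, [derivable true] is NeL^{as,1}. *)
Inductive derivable (as_ : bool) (G : fm -> Prop) : fm -> Prop :=
| d_hyp : forall a, G a -> derivable as_ G a
| d_A1 : forall a, derivable as_ G (fImp a a)
| d_A2 : forall a b, derivable as_ G (fImp (Oc a b) (Oc b a))
| d_A3 : forall a, derivable as_ G (fImp a (St (St a)))
| d_A4 : forall a b, derivable as_ G (fImp (fImp a b) (Oc a b))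
| d_A5 : forall a b, derivable as_ G (fIff (Ot a b) (Ot b a))
| d_A6 : forall a b c,
    derivable as_ G (fImp (fImp (Ot a b) c) (fImp (Ot a (St c)) (St b)))
| d_A7 : forall a b c,
    derivable as_ G (fImp (fNe3 a b c)
                          (fImp (fImp a b) (fImp (fImp b c) (fImp a c))))
| d_MP : forall a b, derivable as_ G (fImp a b) -> derivable as_ G a ->
    derivable as_ G b
| d_adj : forall a b, derivable as_ G a -> derivable as_ G b ->
    derivable as_ G (Ot a b)
| d_repl : forall a b c c', derivable as_ G (fIff a b) -> derivable as_ G c ->
    repl1 a b c c' -> derivable as_ G c'
| d_proj : forall a b, derivable as_ G (Ot a b) -> derivable as_ G a
| d_oplus : forall a b, derivable as_ G a -> derivable as_ G (fOplus a b)
| d_A8 : forall a b c, derivable as_ G (fImp a b) -> derivable as_ G (fImp b c) ->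
    derivable as_ G (fImp a c)
| d_as1 : forall a b c, as_ = true ->
    derivable as_ G (fImp (Ot (Ot a b) c) (Ot a (Ot b c)))
| d_as2 : forall a b c, as_ = true ->
    derivable as_ G (fImp (Ot a (Ot b c)) (Ot (Ot a b) c)).

Inductive ext (A : Type) : Type :=
| Elt : A -> ext A
| Tt : ext A
| Ff : ext A.
Arguments Elt {A} _.
Arguments Tt {A}.
Arguments Ff {A}.

(** Structures (A, ⊗, ∘, *, ⊥) ; the axioms are stated as predicates below. *)
Record structure : Type := {
  car : Type;
  mot : car -> car -> car;
  moc : car -> car -> car;
  mst : car -> car;
  mperp : ext car -> ext car -> Prop }.

Section Ops.
Variable M : structure.
Definition mImp (x y : car M) : car M := mst M (moc M x (mst M y)).
Definition mIff (x y : car M) : car M := mot M (mImp x y) (mImp y x).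
Definition mNiff (x y : car M) : car M := mst M (mIff x y).
Definition mNe3 (x y z : car M) : car M :=
  mot M (mot M (mNiff x y) (mNiff x z)) (mNiff y z).
Definition mOplus (x y : car M) : car M := mst M (mot M (mst M x) (mst M y)).
Definition pp (x y : car M) : Prop := mperp M (Elt x) (Elt y).

Definition weak_N_algebra : Prop :=
  (forall x y, mot M x y = mot M y x) /\
  (forall x y, moc M x y = moc M y x) /\
  (forall x, mst M (mst M x) = x) /\
  (forall x y z, moc M (mot M x y) z = moc M (mot M x z) y).

Definition N_algebra : Prop :=
  weak_N_algebra /\ (forall x y z, mot M (mot M x y) z = mot M x (mot M y z)).

Definition Nw_model : Prop :=
  weak_N_algebra /\
  (forall x, pp x (mst M x)) /\
  (forall x y, pp x (mst M y) -> pp y (mst M x) -> x = y) /\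
  (forall x y, pp x y <-> mperp M (Elt (moc M x y)) Tt) /\
  (forall x, mperp M (Elt x) Tt <-> mperp M (Elt (mst M x)) Ff) /\
  (forall x y, (mperp M (Elt x) Ff /\ mperp M (Elt y) Ff) <->
               mperp M (Elt (mot M x y)) Ff) /\
  (forall x y, pp (mst M (moc M x (mst M y))) (mst M (moc M x y))) /\
  (forall x y, pp x y -> mperp M (Elt x) Ff -> mperp M (Elt y) Tt) /\
  (forall x y z, pp (mNe3 x y z)
     (mst M (mImp (mImp x y) (mImp (mImp y z) (mImp x z))))).

Definition Nw1_model : Prop :=
  Nw_model /\
  (forall x y, mperp M (Elt x) Ff -> mperp M (Elt (mOplus x y)) Ff) /\
  (forall x y z, pp x (mst M y) -> pp y (mst M z) -> pp x (mst M z)).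

Definition N1_model : Prop := Nw1_model /\ N_algebra.

Definition F_perp (a : car M) : Prop := mperp M (Elt a) Ff.

Definition is_hom (h : fm -> car M) : Prop :=
  (forall a b, h (Ot a b) = mot M (h a) (h b)) /\
  (forall a b, h (Oc a b) = moc M (h a) (h b)) /\
  (forall a, h (St a) = mst M (h a)).
End Ops.

Definition consequence (K : structure -> Prop) (G : fm -> Prop) (phi : fm) : Prop :=
  exists L : list fm, (forall a, In a L -> G a) /\
    forall M : structure, K M -> forall h : fm -> car M, is_hom M h ->
      (forall a, In a L -> F_perp M (h a)) -> F_perp M (h phi).

(** Soundness is checked rule by rule: in an [Nw1]-model, [F_perp] contains
    [h(x => x)], is closed under modus ponens and adjunction, and
    [F_perp (h (x <=> y))] forces [h x = h y] by condition (b), so replacement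
    is sound.  Completeness uses the Lindenbaum algebra: formulas modulo
    provable equivalence [|- a <=> b], with [x ⊥ y] read as [|- (x ∘ y)^*],
    [x ⊥ t] as [|- x^*] and [x ⊥ f] as [|- x].  The axioms and rules of
    [NeL^1] are exactly what makes this an [Nw1]-model (an [N1]-model in the
    presence of the associativity axioms), and the class map is a
    homomorphism whose [F_perp] is the set of derivable formulas. *)

From Stdlib Require Import List Morphisms ProofIrrelevance
  FunctionalExtensionality PropExtensionality IndefiniteDescription.

Section Interderivability.
Variable as_ : bool.
Variable G : fm -> Prop.
Notation D := (derivable as_ G).

Definition interderivable (a b : fm) : Prop := D (fIff a b).

Lemma repl1_Otl p q a a' b : repl1 p q a a' -> repl1 p q (Ot a b) (Ot a' b).
Proof. intro; apply repl_Ot; auto. Qed.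

Lemma repl1_Otr p q a b b' : repl1 p q b b' -> repl1 p q (Ot a b) (Ot a b').
Proof. intro; apply repl_Ot; auto. Qed.

Lemma repl1_Ocl p q a a' b : repl1 p q a a' -> repl1 p q (Oc a b) (Oc a' b).
Proof. intro; apply repl_Oc; auto. Qed.

Lemma repl1_Ocr p q a b b' : repl1 p q b b' -> repl1 p q (Oc a b) (Oc a b').
Proof. intro; apply repl_Oc; auto. Qed.

Lemma interderivable_repl_r p q a b b' :
  interderivable p q -> repl1 p q b b' ->
  interderivable a b -> interderivable a b'.
Proof.
  intros Hpq Hr Hab; apply (d_repl _ _ _ _ _ _ Hpq Hab).
  unfold fIff, fImp; apply repl_Ot; right.
  - exact (repl_St _ _ _ _ (repl1_Ocr _ _ _ _ _ (repl_St _ _ _ _ Hr))).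
  - exact (repl_St _ _ _ _ (repl1_Ocl _ _ _ _ _ Hr)).
  - exact (repl_St _ _ _ _ (repl1_Ocl _ _ _ _ _ Hr)).
Qed.

Lemma interderivable_derivable a b : interderivable a b -> D a -> D b.
Proof. intros Hab Ha; exact (d_repl _ _ _ _ _ _ Hab Ha (repl_here a b)). Qed.

Global Instance interderivable_Equivalence : Equivalence interderivable.
Proof.
  split.
  - intro a; apply d_adj; apply d_A1.
  - (* [a <=> b] is a [⊗] of two implications, so (A5) swaps them. *)
    intros a b Hab; exact (interderivable_derivable _ _ (d_A5 _ _ _ _) Hab).
  - intros a b c Hab Hbc; exact (interderivable_repl_r _ _ _ _ _ Hbc (repl_here b c) Hab).
Qed.

Global Instance Ot_Proper : Proper (interderivable ==> interderivable ==> interderivable) Ot.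
Proof.
  intros a a' Ha b b' Hb.
  apply (interderivable_repl_r _ _ _ _ _ Hb (repl1_Otr _ _ a' _ _ (repl_here b b'))).
  apply (interderivable_repl_r _ _ _ _ _ Ha (repl1_Otl _ _ _ _ b (repl_here a a'))).
  reflexivity.
Qed.

Global Instance Oc_Proper : Proper (interderivable ==> interderivable ==> interderivable) Oc.
Proof.
  intros a a' Ha b b' Hb.
  apply (interderivable_repl_r _ _ _ _ _ Hb (repl1_Ocr _ _ a' _ _ (repl_here b b'))).
  apply (interderivable_repl_r _ _ _ _ _ Ha (repl1_Ocl _ _ _ _ b (repl_here a a'))).
  reflexivity.
Qed.

Global Instance St_Proper : Proper (interderivable ==> interderivable) St.
Proof.
  intros a a' Ha.
  apply (interderivable_repl_r _ _ _ _ _ Ha (repl_St _ _ _ _ (repl_here a a'))).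
  reflexivity.
Qed.

Global Instance derivable_Proper : Proper (interderivable ==> iff) D.
Proof.
  intros a b Hab; split; apply interderivable_derivable; [exact Hab | symmetry; exact Hab].
Qed.

Lemma Ot_comm a b : interderivable (Ot a b) (Ot b a).
Proof. apply d_A5. Qed.

Lemma Oc_comm a b : interderivable (Oc a b) (Oc b a).
Proof. apply d_adj; apply d_A2. Qed.

Lemma St_involutive a : interderivable (St (St a)) a.
Proof.
  apply d_adj; [|apply d_A3].
  pose proof (d_A1 as_ G (St a)) as Hrefl; unfold fImp in *.
  rewrite (Oc_comm (St a) (St (St a))) in Hrefl; exact Hrefl.
Qed.

Lemma Oc_Ot_exchange a b c : interderivable (Oc (Ot a b) c) (Oc (Ot a c) b).
Proof.
  assert (Himp : forall b c, D (fImp (St (Oc (Ot a b) c)) (St (Oc (Ot a c) b)))).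
  { intros b' c'; pose proof (d_A6 as_ G a b' (St c')) as H6.
    unfold fImp in *; rewrite !St_involutive in *; exact H6. }
  assert (Hst : interderivable (St (Oc (Ot a b) c)) (St (Oc (Ot a c) b)))
    by (apply d_adj; apply Himp).
  rewrite <- (St_involutive (Oc (Ot a b) c)), Hst; apply St_involutive.
Qed.

Lemma derivable_proj_r a b : D (Ot a b) -> D b.
Proof. rewrite Ot_comm; apply d_proj. Qed.

End Interderivability.

Section Quotient.
Context {T : Type} (R : T -> T -> Prop) `{Equivalence T R}.

Definition quot : Type := {P : T -> Prop | exists a, P = R a}.

Definition qclass (a : T) : quot := exist _ (R a) (ex_intro _ a eq_refl).

Definition qrepr (x : quot) : T :=
  proj1_sig (constructive_indefinite_description _ (proj2_sig x)).

Lemma qclass_repr x : qclass (qrepr x) = x.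
Proof.
  unfold qrepr; destruct (constructive_indefinite_description _ _) as [a Ha].
  destruct x as [P HP]; cbn in *; subst P; apply subset_eq_compat; reflexivity.
Qed.

Lemma qclass_eq a b : qclass a = qclass b <-> R a b.
Proof.
  split.
  - intro Hab; apply (f_equal (@proj1_sig _ _)) in Hab; cbn in Hab.
    rewrite Hab; reflexivity.
  - intro Hab; apply subset_eq_compat.
    apply functional_extensionality; intro c; apply propositional_extensionality.
    rewrite Hab; reflexivity.
Qed.

Lemma qrepr_class a : R (qrepr (qclass a)) a.
Proof. apply qclass_eq, qclass_repr. Qed.

Lemma quot_eq x y : R (qrepr x) (qrepr y) -> x = y.
Proof. intro Hxy; rewrite <- (qclass_repr x), <- (qclass_repr y); apply qclass_eq, Hxy. Qed.

End Quotient.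

Section Lindenbaum.
Variable as_ : bool.
Variable G : fm -> Prop.
Notation D := (derivable as_ G).
Notation eqv := (interderivable as_ G).
Notation carrier := (quot eqv).
Notation cls := (qclass eqv).
Notation rep := (qrepr eqv).

Definition Lot (x y : carrier) : carrier := cls (Ot (rep x) (rep y)).
Definition Loc (x y : carrier) : carrier := cls (Oc (rep x) (rep y)).
Definition Lst (x : carrier) : carrier := cls (St (rep x)).

Definition Lperp (u v : ext carrier) : Prop :=
  match u, v with
  | Elt x, Elt y => D (St (Oc (rep x) (rep y)))
  | Elt x, Tt => D (St (rep x))
  | Elt x, Ff => D (rep x)
  | _, _ => False
  end.

Definition LM : structure := Build_structure carrier Lot Loc Lst Lperp.

Lemma rep_Lot x y : eqv (rep (Lot x y)) (Ot (rep x) (rep y)).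
Proof. exact (qrepr_class _ _). Qed.

Lemma rep_Loc x y : eqv (rep (Loc x y)) (Oc (rep x) (rep y)).
Proof. exact (qrepr_class _ _). Qed.

Lemma rep_Lst x : eqv (rep (Lst x)) (St (rep x)).
Proof. exact (qrepr_class _ _). Qed.

Hint Rewrite rep_Lot rep_Loc rep_Lst : rep.

Lemma LM_weak : weak_N_algebra LM.
Proof.
  repeat split; intros; apply (quot_eq eqv); cbn; autorewrite with rep.
  - apply Ot_comm.
  - apply Oc_comm.
  - apply St_involutive.
  - apply Oc_Ot_exchange.
Qed.

Lemma LM_Nw : Nw_model LM.
Proof.
  split; [exact LM_weak|]; unfold pp, mNe3, mNiff, mIff, mImp; cbn.
  repeat split; intros; autorewrite with rep in *; try tauto.
  - apply d_A1.
  - apply (quot_eq eqv), d_adj; assumption.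
  - apply d_adj; tauto.
  - eapply d_proj; eassumption.
  - eapply derivable_proj_r; eassumption.
  - apply d_A4.
  - apply (d_MP _ _ (rep x)); [unfold fImp; rewrite St_involutive |]; assumption.
  - apply d_A7.
Qed.

Lemma LM_Nw1 : Nw1_model LM.
Proof.
  split; [exact LM_Nw|]; unfold pp, mOplus; cbn.
  split; intros; autorewrite with rep in *.
  - apply d_oplus; assumption.
  - eapply d_A8; eassumption.
Qed.

Lemma LM_N1 : as_ = true -> N1_model LM.
Proof.
  intro Has; split; [exact LM_Nw1|]; split; [exact LM_weak|].
  intros; apply (quot_eq eqv); cbn; autorewrite with rep.
  apply d_adj; [apply d_as1 | apply d_as2]; exact Has.
Qed.

Lemma LM_hom : is_hom LM cls.
Proof.
  repeat split; intros; apply (qclass_eq eqv); cbn; rewrite ?(qrepr_class eqv); reflexivity.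
Qed.

Lemma F_perp_LM a : F_perp LM (cls a) <-> D a.
Proof. cbn; rewrite (qrepr_class eqv); reflexivity. Qed.

End Lindenbaum.

Section Homomorphism.
Variable M : structure.
Variable h : fm -> car M.
Hypothesis Hh : is_hom M h.

Lemma hom_Ot a b : h (Ot a b) = mot M (h a) (h b).
Proof. apply Hh. Qed.

Lemma hom_Oc a b : h (Oc a b) = moc M (h a) (h b).
Proof. apply Hh. Qed.

Lemma hom_St a : h (St a) = mst M (h a).
Proof. apply Hh. Qed.

Lemma hom_fImp a b : h (fImp a b) = mImp M (h a) (h b).
Proof. unfold fImp, mImp; rewrite hom_St, hom_Oc, hom_St; reflexivity. Qed.

Lemma hom_fIff a b : h (fIff a b) = mIff M (h a) (h b).
Proof. unfold fIff, mIff; rewrite hom_Ot, !hom_fImp; reflexivity. Qed.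

Lemma hom_fNe3 a b c : h (fNe3 a b c) = mNe3 M (h a) (h b) (h c).
Proof. unfold fNe3, mNe3, fNiff, mNiff; rewrite !hom_Ot, !hom_St, !hom_fIff; reflexivity. Qed.

Lemma hom_fOplus a b : h (fOplus a b) = mOplus M (h a) (h b).
Proof. unfold fOplus, mOplus; rewrite !hom_St, hom_Ot, !hom_St; reflexivity. Qed.

Lemma hom_repl1 p q c c' : h p = h q -> repl1 p q c c' -> h c = h c'.
Proof.
  intro Hpq; revert c'.
  induction c as [n | a IHa b IHb | a IHa b IHb | a IHa]; intros c' r;
    inversion r; subst; try exact Hpq.
  all: rewrite ?hom_Ot, ?hom_Oc, ?hom_St; f_equal; intuition (subst; auto).
Qed.

End Homomorphism.

Section NwModel.
Variable M : structure.
Hypothesis HM : Nw_model M.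
Notation F := (F_perp M).

Lemma mot_comm x y : mot M x y = mot M y x.
Proof. destruct HM as [[Hcomm _] _]; apply Hcomm. Qed.

Lemma moc_comm x y : moc M x y = moc M y x.
Proof. destruct HM as [[_ [Hcomm _]] _]; apply Hcomm. Qed.

Lemma mst_involutive x : mst M (mst M x) = x.
Proof. destruct HM as [[_ [_ [Hinv _]]] _]; apply Hinv. Qed.

Lemma moc_mot_exchange x y z : moc M (mot M x y) z = moc M (mot M x z) y.
Proof. destruct HM as [[_ [_ [_ Hexch]]] _]; apply Hexch. Qed.

Lemma F_mImp x y : F (mImp M x y) <-> pp M x (mst M y).
Proof.
  destruct HM as [_ [_ [_ [Hc [Hd _]]]]].
  unfold F_perp, mImp; rewrite <- Hd, <- Hc; reflexivity.
Qed.

Lemma F_mot x y : F (mot M x y) <-> F x /\ F y.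
Proof. destruct HM as [_ [_ [_ [_ [_ [He _]]]]]]; symmetry; apply He. Qed.

Lemma F_mImp_refl x : F (mImp M x x).
Proof. destruct HM as [_ [Ha _]]; apply F_mImp, Ha. Qed.

Lemma F_mIff_refl x : F (mIff M x x).
Proof. apply F_mot; split; apply F_mImp_refl. Qed.

Lemma F_mIff_eq x y : F (mIff M x y) -> x = y.
Proof.
  unfold mIff; rewrite F_mot, !F_mImp; intros [Hxy Hyx].
  destruct HM as [_ [_ [Hb _]]]; exact (Hb _ _ Hxy Hyx).
Qed.

Lemma F_mImp_mp x y : F (mImp M x y) -> F x -> F y.
Proof.
  rewrite F_mImp; intros Hxy Hx.
  destruct HM as [_ [_ [_ [_ [Hd [_ [_ [Hg _]]]]]]]].
  unfold F_perp; rewrite <- (mst_involutive y); apply Hd; exact (Hg _ _ Hxy Hx).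
Qed.

Lemma F_mImp_mImp_moc x y : F (mImp M (mImp M x y) (moc M x y)).
Proof. destruct HM as [_ [_ [_ [_ [_ [_ [Hf _]]]]]]]; apply F_mImp, Hf. Qed.

Lemma F_mImp_exchange x y z :
  F (mImp M (mImp M (mot M x y) z) (mImp M (mot M x (mst M z)) (mst M y))).
Proof.
  apply F_mImp; unfold mImp; rewrite !mst_involutive, moc_mot_exchange.
  rewrite <- (mst_involutive (moc M (mot M x (mst M z)) y)) at 2.
  destruct HM as [_ [Ha _]]; apply Ha.
Qed.

Lemma F_mImp_mNe3 x y z :
  F (mImp M (mNe3 M x y z) (mImp M (mImp M x y) (mImp M (mImp M y z) (mImp M x z)))).
Proof. destruct HM as [_ [_ [_ [_ [_ [_ [_ [_ Hne3]]]]]]]]; apply F_mImp, Hne3. Qed.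

End NwModel.

Section FiniteConsequence.
Variable K : structure -> Prop.
Variable G : fm -> Prop.

Definition valid_in (c : fm) : Prop :=
  forall M h, K M -> is_hom M h -> F_perp M (h c).

Lemma consequence_valid c : valid_in c -> consequence K G c.
Proof. intro Hc; exists nil; split; [contradiction|]; intros M HM h Hh _; exact (Hc M h HM Hh). Qed.

Lemma consequence_hyp a : G a -> consequence K G a.
Proof.
  intro Ha; exists (a :: nil); split.
  - intros b [<- | []]; exact Ha.
  - intros M _ h _ HL; apply HL; left; reflexivity.
Qed.

Lemma consequence_rule2 a b c :
  (forall M h, K M -> is_hom M h -> F_perp M (h a) -> F_perp M (h b) -> F_perp M (h c)) ->
  consequence K G a -> consequence K G b -> consequence K G c.
Proof.
  intros Hrule [La [HGa Ha]] [Lb [HGb Hb]]; exists (La ++ Lb); split.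
  - intros d Hd; apply in_app_or in Hd; destruct Hd; auto.
  - intros M HM h Hh HL; apply (Hrule M h HM Hh).
    + apply Ha; auto; intros d Hd; apply HL, in_or_app; left; exact Hd.
    + apply Hb; auto; intros d Hd; apply HL, in_or_app; right; exact Hd.
Qed.

Lemma consequence_rule1 a c :
  (forall M h, K M -> is_hom M h -> F_perp M (h a) -> F_perp M (h c)) ->
  consequence K G a -> consequence K G c.
Proof. intros Hrule Ha; apply (consequence_rule2 a a c); auto. Qed.

End FiniteConsequence.

Ltac push_hom Hh :=
  repeat rewrite ?(hom_fNe3 _ _ Hh), ?(hom_fImp _ _ Hh), ?(hom_fIff _ _ Hh),
    ?(hom_fOplus _ _ Hh), ?(hom_Ot _ _ Hh), ?(hom_Oc _ _ Hh), ?(hom_St _ _ Hh).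

Section Soundness.
Variable K : structure -> Prop.
Hypothesis K_Nw1 : forall M, K M -> Nw1_model M.

Lemma K_Nw M : K M -> Nw_model M.
Proof. intro HK; exact (proj1 (K_Nw1 M HK)). Qed.

Lemma valid_A1 a : valid_in K (fImp a a).
Proof. intros M h HK Hh; push_hom Hh; apply F_mImp_refl, K_Nw, HK. Qed.

Lemma valid_A2 a b : valid_in K (fImp (Oc a b) (Oc b a)).
Proof.
  intros M h HK Hh; push_hom Hh; pose proof (K_Nw M HK) as HM.
  rewrite (moc_comm M HM (h a)); apply F_mImp_refl, HM.
Qed.

Lemma valid_A3 a : valid_in K (fImp a (St (St a))).
Proof.
  intros M h HK Hh; push_hom Hh; pose proof (K_Nw M HK) as HM.
  rewrite (mst_involutive M HM); apply F_mImp_refl, HM.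
Qed.

Lemma valid_A4 a b : valid_in K (fImp (fImp a b) (Oc a b)).
Proof. intros M h HK Hh; push_hom Hh; apply F_mImp_mImp_moc, K_Nw, HK. Qed.

Lemma valid_A5 a b : valid_in K (fIff (Ot a b) (Ot b a)).
Proof.
  intros M h HK Hh; push_hom Hh; pose proof (K_Nw M HK) as HM.
  rewrite (mot_comm M HM (h a)); apply F_mIff_refl, HM.
Qed.

Lemma valid_A6 a b c : valid_in K (fImp (fImp (Ot a b) c) (fImp (Ot a (St c)) (St b))).
Proof. intros M h HK Hh; push_hom Hh; apply F_mImp_exchange, K_Nw, HK. Qed.

Lemma valid_A7 a b c :
  valid_in K (fImp (fNe3 a b c) (fImp (fImp a b) (fImp (fImp b c) (fImp a c)))).
Proof. intros M h HK Hh; push_hom Hh; apply F_mImp_mNe3, K_Nw, HK. Qed.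

Section Associative.
Hypothesis K_assoc :
  forall M, K M -> forall x y z, mot M (mot M x y) z = mot M x (mot M y z).

Lemma valid_as1 a b c : valid_in K (fImp (Ot (Ot a b) c) (Ot a (Ot b c))).
Proof.
  intros M h HK Hh; push_hom Hh.
  rewrite (K_assoc M HK); apply F_mImp_refl, K_Nw, HK.
Qed.

Lemma valid_as2 a b c : valid_in K (fImp (Ot a (Ot b c)) (Ot (Ot a b) c)).
Proof.
  intros M h HK Hh; push_hom Hh.
  rewrite (K_assoc M HK); apply F_mImp_refl, K_Nw, HK.
Qed.

End Associative.

Lemma derivable_sound as_ G phi :
  (as_ = true -> forall M, K M -> forall x y z, mot M (mot M x y) z = mot M x (mot M y z)) ->
  derivable as_ G phi -> consequence K G phi.
Proof.
  intro K_assoc.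
  induction 1 as
    [a Ha | | | | | | | | a b _ IHab _ IHa | a b _ IHa _ IHb
    | a b c c' _ IHab _ IHc Hr | a b _ IHab | a b _ IHa
    | a b c _ IHab _ IHbc | a b c Has | a b c Has].
  - apply consequence_hyp; exact Ha.
  - apply consequence_valid, valid_A1.
  - apply consequence_valid, valid_A2.
  - apply consequence_valid, valid_A3.
  - apply consequence_valid, valid_A4.
  - apply consequence_valid, valid_A5.
  - apply consequence_valid, valid_A6.
  - apply consequence_valid, valid_A7.
  - revert IHab IHa; apply consequence_rule2; intros M h HK Hh; push_hom Hh.
    apply F_mImp_mp, K_Nw, HK.
  - revert IHa IHb; apply consequence_rule2; intros M h HK Hh; push_hom Hh.
    intros; apply F_mot; auto; apply K_Nw, HK.
  - revert IHab IHc; apply consequence_rule2; intros M h HK Hh; push_hom Hh.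
    intros Hab Hc; erewrite <- hom_repl1; [exact Hc | exact Hh | | exact Hr].
    apply (F_mIff_eq M); [apply K_Nw, HK | exact Hab].
  - revert IHab; apply consequence_rule1; intros M h HK Hh; push_hom Hh.
    apply F_mot, K_Nw, HK.
  - revert IHa; apply consequence_rule1; intros M h HK Hh; push_hom Hh.
    destruct (K_Nw1 M HK) as [_ [Hoplus _]]; apply Hoplus.
  - revert IHab IHbc; apply consequence_rule2; intros M h HK Hh; push_hom Hh.
    destruct (K_Nw1 M HK) as [HM [_ Htrans]].
    rewrite !(F_mImp M HM); apply Htrans.
  - apply consequence_valid, valid_as1, K_assoc, Has.
  - apply consequence_valid, valid_as2, K_assoc, Has.
Qed.

End Soundness.

Lemma consequence_complete as_ K G phi :
  K (LM as_ G) -> consequence K G phi -> derivable as_ G phi.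
Proof.
  intros HK [L [HLG Hcons]]; apply F_perp_LM.
  apply (Hcons _ HK _ (LM_hom as_ G)); intros a Ha.
  apply F_perp_LM, d_hyp, HLG, Ha.
Qed.

Theorem theorem6p2 : forall (G : fm -> Prop) (phi : fm),
  (derivable false G phi <-> consequence Nw1_model G phi) /\
  (derivable true G phi <-> consequence N1_model G phi).
Proof.
  intros G phi; split; split.
  - apply derivable_sound; [exact (fun M HM => HM) | discriminate].
  - apply consequence_complete, LM_Nw1.
  - apply derivable_sound; [exact (fun M HM => proj1 HM) | exact (fun _ M HM => proj2 (proj2 HM))].
  - apply consequence_complete, LM_N1; reflexivity.
Qed.
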